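(* Let $A$ be a skew brace. For a subset $S\subseteq\mathrm{Spec}\,A$ let $K(S)=\bigcap_{I\in S}I$. Then: (i) $K(\emptyset)=A$ and $K\big(\bigcup_{\lambda\in\Lambda}T_\lambda\big)=\bigcap_{\lambda\in\Lambda}K(T_\lambda)$ for every family $\{T_\lambda\}$ of subsets of $\mathrm{Spec}\,A$; (ii) for every ideal $I$ of $A$, $KH(I)=\mathrm{Rad}\,I$, and for every subset $S\subseteq\mathrm{Spec}\,A$, $HK(S)$ is the closure of $S$ in $\mathrm{Spec}\,A$.
   Context: A (left) skew brace is a triple $(A,+,\circ)$ where $(A,+)$ and $(A,\circ)$ are groups such that $a\circ(b+c)=a\circ b-a+a\circ c$ for all $a,b,c$; common identity $e$. Put $\lambda_a(b)=-a+a\circ b$ and $a*b=-a+a\circ b-b$. An ideal is a normal subgroup $I$ of both $(A,+)$ and $(A,\circ)$ with $\lambda_a(I)\subseteq I$ for all $a$. A prime ideal is a proper ideal $P$ such that for any subsets $X,Y$ of $A$, $\{x*y\mid x\in X,y\in Y\}\subseteq P$ implies $X\subseteq P$ or $Y\subseteq P$; $\mathrm{Spec}\,A$ is the set of prime ideals. For an ideal $I$, $H(I)=\{P\in\mathrm{Spec}\,A\mid I\subseteq P\}$ and $\mathrm{Rad}\,I=\bigcap\{P\in\mathrm{Spec}\,A\mid I\subseteq P\}$. The spectral topology on $\mathrm{Spec}\,A$ has as closed sets the sets $H(I)$, $I$ an ideal (and $K(S)$ is an ideal, so $HK(S)$ is defined). *)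

Record SkewBrace := {
  carrier :> Type;
  add : carrier -> carrier -> carrier;
  opp : carrier -> carrier;
  e : carrier;
  circ : carrier -> carrier -> carrier;
  cinv : carrier -> carrier;
  addA : forall a b c, add a (add b c) = add (add a b) c;
  add0l : forall a, add e a = a;
  add0r : forall a, add a e = a;
  addNl : forall a, add (opp a) a = e;
  addNr : forall a, add a (opp a) = e;
  circA : forall a b c, circ a (circ b c) = circ (circ a b) c;
  circ1l : forall a, circ e a = a;
  circ1r : forall a, circ a e = a;
  circVl : forall a, circ (cinv a) a = e;
  circVr : forall a, circ a (cinv a) = e;
  brace : forall a b c, circ a (add b c) = add (add (circ a b) (opp a)) (circ a c)
}.

Section Defs.
Variable A : SkewBrace.

Definition lam (a b : A) : A := add A (opp A a) (circ A a b).
Definition star (a b : A) : A := add A (add A (opp A a) (circ A a b)) (opp A b).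

Definition is_ideal (I : A -> Prop) : Prop :=
  I (e A) /\
  (forall x y, I x -> I y -> I (add A x y)) /\
  (forall x, I x -> I (opp A x)) /\
  (forall a x, I x -> I (add A (add A a x) (opp A a))) /\
  (forall x y, I x -> I y -> I (circ A x y)) /\
  (forall x, I x -> I (cinv A x)) /\
  (forall a x, I x -> I (circ A (circ A a x) (cinv A a))) /\
  (forall a x, I x -> I (lam a x)).

Definition is_prime (P : A -> Prop) : Prop :=
  is_ideal P /\ (exists a, ~ P a) /\
  (forall X Y : A -> Prop,
      (forall x y, X x -> Y y -> P (star x y)) ->
      (forall x, X x -> P x) \/ (forall y, Y y -> P y)).

Definition Spec (P : A -> Prop) : Prop := is_prime P.

Definition K (S : (A -> Prop) -> Prop) : A -> Prop :=
  fun a => forall I, S I -> I a.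

Definition H (I : A -> Prop) : (A -> Prop) -> Prop :=
  fun P => Spec P /\ (forall a, I a -> P a).

Definition Rad (I : A -> Prop) : A -> Prop :=
  fun a => forall P, Spec P -> (forall x, I x -> P x) -> P a.

Definition closed_spec (C : (A -> Prop) -> Prop) : Prop :=
  exists I, is_ideal I /\ (forall P, C P <-> H I P).

Definition closure (S : (A -> Prop) -> Prop) : (A -> Prop) -> Prop :=
  fun P => Spec P /\
    (forall C, closed_spec C -> (forall Q, S Q -> C Q) -> C P).

End Defs.

Arguments lam {A}. Arguments star {A}. Arguments is_ideal {A}. Arguments is_prime {A}.
Arguments Spec {A}. Arguments K {A}. Arguments H {A}. Arguments Rad {A}.
Arguments closed_spec {A}. Arguments closure {A}.
Arguments add {s}. Arguments opp {s}. Arguments e {s}. Arguments circ {s}. Arguments cinv {s}.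


(* K and H form an antitone Galois connection between sets of primes and
   subsets of A: [S ⊆ H(I)] iff [I ⊆ K(S)].  Part (i) and [KH(I) = Rad I] are
   unfoldings of the definitions; for the closure, [HK(S)] is closed because an
   intersection of ideals is an ideal, it contains S, and any closed [H(I) ⊇ S]
   satisfies [I ⊆ K(S)], hence [H(I) ⊇ HK(S)]. *)

Section SpecTopology.
Variable A : SkewBrace.

Lemma K_empty (a : A) : K (fun _ => False) a.
Proof. intros I []. Qed.

Lemma K_bigcup (Lambda : Type) (T : Lambda -> (A -> Prop) -> Prop) (a : A) :
  K (fun P => exists l, T l P) a <-> (forall l, K (T l) a).
Proof.
  split.
  - intros HK l I HI; apply HK; exists l; exact HI.
  - intros HK I [l HI]; exact (HK l I HI).
Qed.

Lemma KH_Rad (I : A -> Prop) (a : A) : K (H I) a <-> Rad I a.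
Proof.
  split.
  - intros HK P HP HIP; apply HK; split; assumption.
  - intros HR P [HP HIP]; exact (HR P HP HIP).
Qed.

Lemma is_ideal_K (S : (A -> Prop) -> Prop) :
  (forall I, S I -> is_ideal I) -> is_ideal (K S).
Proof.
  intros HS; unfold is_ideal, K.
  repeat split; intros;
    match goal with SI : S ?I |- _ =>
      destruct (HS I SI) as (h1 & h2 & h3 & h4 & h5 & h6 & h7 & h8);
      repeat match goal with Hx : forall J, S J -> J _ |- _ => specialize (Hx I SI) end
    end; auto.
Qed.

Lemma closed_H (I : A -> Prop) : is_ideal I -> closed_spec (H I).
Proof. intros HI; exists I; split; [exact HI | tauto]. Qed.

Lemma H_antitone (I J : A -> Prop) (P : A -> Prop) :
  (forall a, I a -> J a) -> H J P -> H I P.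
Proof. intros HIJ [HP HJP]; split; auto. Qed.

Lemma sub_K_of_sub_H (S : (A -> Prop) -> Prop) (I : A -> Prop) :
  (forall Q, S Q -> H I Q) -> forall a, I a -> K S a.
Proof. intros HSI a Ia Q SQ; exact (proj2 (HSI Q SQ) a Ia). Qed.

Lemma sub_HK (S : (A -> Prop) -> Prop) (P : A -> Prop) :
  (forall Q, S Q -> Spec Q) -> S P -> H (K S) P.
Proof. intros HS SP; split; [auto | intros a Ka; exact (Ka P SP)]. Qed.

Lemma HK_sub_closed (S C : (A -> Prop) -> Prop) (P : A -> Prop) :
  closed_spec C -> (forall Q, S Q -> C Q) -> H (K S) P -> C P.
Proof.
  intros [I [_ HC]] HSC HP.
  apply HC, (H_antitone I (K S)); [| exact HP].
  apply sub_K_of_sub_H; intros Q SQ; apply HC, HSC, SQ.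
Qed.

Lemma HK_closure (S : (A -> Prop) -> Prop) (P : A -> Prop) :
  (forall Q, S Q -> Spec Q) -> H (K S) P <-> closure S P.
Proof.
  intros HS; split.
  - intros HP; split; [exact (proj1 HP) |].
    intros C HC HSC; exact (HK_sub_closed S C P HC HSC HP).
  - intros [_ Hcl]; apply Hcl.
    + apply closed_H, is_ideal_K; intros I SI; exact (proj1 (HS I SI)).
    + intros Q SQ; exact (sub_HK S Q HS SQ).
Qed.

End SpecTopology.

Theorem theorem4p4 (A : SkewBrace) :
  (* (i) *)
  (forall a : A, K (fun _ : A -> Prop => False) a) /\
  (forall (Lambda : Type) (T : Lambda -> (A -> Prop) -> Prop),
      (forall l P, T l P -> Spec P) ->
      forall a : A,
        K (fun P => exists l, T l P) a <-> (forall l, K (T l) a)) /\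
  (* (ii) *)
  (forall I : A -> Prop, is_ideal I ->
      forall a : A, K (H I) a <-> Rad I a) /\
  (forall S : (A -> Prop) -> Prop, (forall P, S P -> Spec P) ->
      forall P : A -> Prop, H (K S) P <-> closure S P).
Proof.
  split; [exact (K_empty A) |].
  split; [intros Lambda T _; exact (K_bigcup A Lambda T) |].
  split; [intros I _; exact (KH_Rad A I) |].
  intros S HS P; exact (HK_closure A S P HS).
Qed.
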